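(* Let $n\ge3$ and $\pi\in\mathrm{Eq}(\mathsf{B}_n)$. If the variety $\mathbf{A}_n\{\mathsf{Id}(\pi)\}$ satisfies an identity $\mathbf{u}\approx\mathbf{v}$ with $\mathbf{u}\in\mathsf{B}_n$, then $\mathbf{v}\in\mathsf{B}_n$ and $(\mathbf{u},\mathbf{v})\in\pi$.
   Context: All varieties are varieties of monoids (signature: associative binary operation and identity constant $1$). Words are elements of the free monoid $X^*$ over a countably infinite set $X$ of variables; identities are pairs of words, and variables may be substituted by $1$. For a variety $\mathbf{V}$ and set $\Sigma$ of identities, $\mathbf{V}\Sigma$ is the subvariety of $\mathbf{V}$ defined by $\Sigma$. $\mathbf{O}$ is the variety defined by $xyt_1xt_2y \approx yxt_1xt_2y$, $xt_1xyt_2y \approx xt_1yxt_2y$, $xt_1yt_2xy \approx xt_1yt_2yx$. For $n\ge3$, $\mathtt{A}_n$ is $x^n t_1\cdots t_n \approx t_1x\,t_2x\cdots t_nx$, $\mathbf{A}_n=\mathbf{O}\{\mathtt{A}_n\}$, and $\mathsf{B}_n=\{x^{n-1-j}tx^{j}:0\le j\le n-1\}$ (with $x,t$ distinct variables). For a set $\mathsf{W}$ of words, $\mathrm{Eq}(\mathsf{W})$ is the lattice of equivalence relations on $\mathsf{W}$ and $\mathsf{Id}(\pi)=\{\mathbf{u}\approx\mathbf{v}:(\mathbf{u},\mathbf{v})\in\pi\}$. *)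

From mathcomp Require Import all_boot.
Set Implicit Arguments. Unset Strict Implicit. Unset Printing Implicit Defensive.

Record monoid := Monoid {
  mcar :> Type;
  mop : mcar -> mcar -> mcar;
  mone : mcar;
  mopA : forall a b c, mop a (mop b c) = mop (mop a b) c;
  mop1l : forall a, mop mone a = a;
  mop1r : forall a, mop a mone = a
}.

Definition word := seq nat.

Definition eval (M : monoid) (s : nat -> M) (w : word) : M :=
  foldr (fun x acc => mop (s x) acc) (mone M) w.

Definition sat (M : monoid) (u v : word) : Prop :=
  forall s : nat -> M, eval s u = eval s v.

(* Defining identities of O; variables x=0, y=1, t1=2, t2=3. *)
Definition sat_O (M : monoid) : Prop :=
  [/\ sat M [:: 0; 1; 2; 0; 3; 1] [:: 1; 0; 2; 0; 3; 1],
      sat M [:: 0; 2; 0; 1; 3; 1] [:: 0; 2; 1; 0; 3; 1]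
    & sat M [:: 0; 2; 1; 3; 0; 1] [:: 0; 2; 1; 3; 1; 0] ].

(* A_n : x^n t1 ... tn ~ t1 x t2 x ... tn x, with x = 0, t_i = i. *)
Definition An_lhs (n : nat) : word := nseq n 0 ++ iota 1 n.
Definition An_rhs (n : nat) : word := flatten [seq [:: i; 0] | i <- iota 1 n].

(* B_n = { x^(n-1-j) t x^j : 0 <= j <= n-1 }, with x = 0, t = 1. *)
Definition Bword (n j : nat) : word := nseq (n - 1 - j) 0 ++ 1 :: nseq j 0.
Definition inB (n : nat) (w : word) : Prop := exists2 j, j < n & w = Bword n j.

Definition eqrel_on_B (n : nat) (pi : word -> word -> Prop) : Prop :=
  [/\ forall u v, pi u v -> inB n u /\ inB n v,
      forall u, inB n u -> pi u u,
      forall u v, pi u v -> pi v u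
    & forall u v w, pi u v -> pi v w -> pi u w ].

(* Membership of M in the variety A_n{Id(pi)} = O{A_n}{Id(pi)}. *)
Definition in_AnId (n : nat) (pi : word -> word -> Prop) (M : monoid) : Prop :=
  [/\ sat_O M, sat M (An_lhs n) (An_rhs n) & forall u v, pi u v -> sat M u v].

Definition var_sat (n : nat) (pi : word -> word -> Prop) (u v : word) : Prop :=
  forall M : monoid, in_AnId n pi M -> sat M u v.

From Pilot Require Import Defs.
From mathcomp Require Import all_boot zify.
From Stdlib Require Import ClassicalEpsilon.
Set Implicit Arguments. Unset Strict Implicit. Unset Printing Implicit Defensive.

(* A single monoid in A_n{Id(pi)} separates u from every word outside its pi-class.
   Its elements are x^k, x^a t x^b and 0, multiplied as words in x and t, where every
   word with two occurrences of t is 0.  Moreover x^a t x^b is 0 when a + b >= n and,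
   when a + b = n - 1, it is replaced by x^(n-1-c) t x^c, the chosen representative
   of the pi-class of x^(n-1-b) t x^b.  The identities of O hold before truncation.
   The two sides of A_n have the same letter content, so they can only differ when
   they contain a single t; then x occurs n times with a value other than 1 (if x is
   sent to 1 both sides are t_1 ... t_n), so both sides vanish.  Id(pi) holds by the
   choice of representatives.  Finally, under x |-> x, t |-> t a word evaluates to
   the representative of the class of u only if it lies in that class. *)

Lemma eval_cat (M : monoid) (s : nat -> M) (w1 w2 : word) :
  eval s (w1 ++ w2) = mop (eval s w1) (eval s w2).
Proof. by elim: w1 => [|x w IH] /=; rewrite ?mop1l // IH mopA. Qed.

Lemma eval_filter_unit (M : monoid) (s : nat -> M) (x : nat) (w : word) :
  s x = mone M -> eval s w = eval s [seq i <- w | i != x].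
Proof.
move=> sx1; elim: w => [|y w IH] //=.
by case: eqP => [->|_] /=; rewrite IH // sx1 mop1l.
Qed.

Section Retract.

Variables (M : monoid) (nf : M -> M) (P : pred M).
Hypothesis nf_mull : forall a b, nf (mop (nf a) b) = nf (mop a b).
Hypothesis nf_mulr : forall a b, nf (mop a (nf b)) = nf (mop a b).
Hypothesis P_nf : forall a, P (nf a).
Hypothesis nf_id : forall a, P a -> nf a = a.

Definition retract_car := {a : M | P a}.

Lemma retract_inj (a b : retract_car) : sval a = sval b -> a = b.
Proof.
case: a b => [a Pa] [b Pb] /= eab; subst b.
by rewrite (bool_irrelevance Pa Pb).
Qed.

Definition retract_mul (a b : retract_car) : retract_car :=
  exist _ (nf (mop (sval a) (sval b))) (P_nf _).

Definition retract_one : retract_car := exist _ (nf (mone M)) (P_nf _).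

Lemma retract_mulA (a b c : retract_car) :
  retract_mul a (retract_mul b c) = retract_mul (retract_mul a b) c.
Proof. by apply: retract_inj; rewrite /= nf_mulr nf_mull mopA. Qed.

Lemma retract_mul1l (a : retract_car) : retract_mul retract_one a = a.
Proof. by apply: retract_inj; case: a => a Pa; rewrite /= nf_mull mop1l nf_id. Qed.

Lemma retract_mul1r (a : retract_car) : retract_mul a retract_one = a.
Proof. by apply: retract_inj; case: a => a Pa; rewrite /= nf_mulr mop1r nf_id. Qed.

Definition retract : monoid :=
  @Defs.Monoid retract_car retract_mul retract_one retract_mulA retract_mul1l retract_mul1r.

Lemma val_eval_retract (s : nat -> retract) (w : word) :
  sval (eval s w) = nf (eval (fun i => sval (s i)) w).
Proof. by elim: w => [|x w IH] //=; rewrite IH nf_mulr. Qed.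

Definition retract_assign (s : nat -> M) : nat -> retract :=
  fun i => exist _ (nf (s i)) (P_nf _).

Lemma nf_eval_nf (s : nat -> M) (w : word) :
  nf (eval (fun i => nf (s i)) w) = nf (eval s w).
Proof.
elim: w => [|x w IH] //=.
by rewrite nf_mull -nf_mulr IH nf_mulr.
Qed.

Lemma sat_retractP (u v : word) :
  sat retract u v <-> forall s : nat -> M, nf (eval s u) = nf (eval s v).
Proof.
split=> [Huv s | Huv s]; last by apply: retract_inj; rewrite !val_eval_retract.
have := f_equal sval (Huv (retract_assign s)).
by rewrite !val_eval_retract /= !nf_eval_nf.
Qed.

Lemma sat_retract (u v : word) : sat M u v -> sat retract u v.
Proof. by move=> Huv; apply/sat_retractP => s; rewrite Huv. Qed.

Lemma sat_O_retract : sat_O M -> sat_O retract.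
Proof. by case=> O1 O2 O3; split; apply: sat_retract. Qed.

End Retract.

Inductive xt := Xp of nat | XtX of nat & nat | Zero.

Definition xt_mul (r s : xt) : xt :=
  match r, s with
  | Xp k, Xp l => Xp (k + l)
  | Xp k, XtX a b => XtX (k + a) b
  | XtX a b, Xp k => XtX a (b + k)
  | _, _ => Zero
  end.

Lemma xt_mulA (r s t : xt) : xt_mul r (xt_mul s t) = xt_mul (xt_mul r s) t.
Proof. by case: r => *; case: s => *; case: t => * //=; rewrite addnA. Qed.

Lemma xt_mul1l (r : xt) : xt_mul (Xp 0) r = r.
Proof. by case: r. Qed.

Lemma xt_mul1r (r : xt) : xt_mul r (Xp 0) = r.
Proof. by case: r => //= *; rewrite addn0. Qed.

Definition xt_monoid : monoid := @Defs.Monoid xt xt_mul (Xp 0) xt_mulA xt_mul1l xt_mul1r.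

Lemma xt_sat_O : sat_O xt_monoid.
Proof.
split=> s; rewrite /eval /=;
  case: (s 0) => *; case: (s 1) => *; case: (s 2) => *; case: (s 3) => * //=;
  f_equal; lia.
Qed.

Lemma eval_xtx (s : nat -> xt_monoid) (a b : nat) :
  s 0 = Xp 1 -> s 1 = XtX 0 0 -> eval s (nseq a 0 ++ 1 :: nseq b 0) = XtX a b.
Proof.
move=> s0 s1; have eval_x k : eval s (nseq k 0) = Xp k.
  by elim: k => [|k IH] //=; rewrite IH s0.
by rewrite eval_cat /= eval_x s1 eval_x /= addn0.
Qed.

Definition gen (i : nat) : xt_monoid :=
  match i with 0 => Xp 1 | 1 => XtX 0 0 | _ => Zero end.

Lemma eval_gen_Xp (w : word) (k : nat) : eval gen w = Xp k -> w = nseq k 0.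
Proof.
elim: w k => [|[|[|c]] w IH] k /=; first by case=> <-.
- by case Ew: (eval gen w) => [l||] //= [<-]; rewrite (IH l Ew).
- by case: (eval gen w).
- done.
Qed.

Lemma eval_gen_XtX (w : word) (a b : nat) :
  eval gen w = XtX a b -> w = nseq a 0 ++ 1 :: nseq b 0.
Proof.
elim: w a b => [|[|[|c]] w IH] a b //=.
- by case Ew: (eval gen w) => [|a' b'|] //= [<- <-]; rewrite (IH a' b' Ew).
- by case Ew: (eval gen w) => [k||] //= [<- <-]; rewrite (eval_gen_Xp Ew).
Qed.

Definition tdeg (r : xt) : nat := if r is Xp _ then 0 else if r is XtX _ _ then 1 else 2.
Definition xdeg (r : xt) : nat :=
  match r with Xp k => k | XtX a b => a + b | Zero => 0 end.

Definition tsum (s : nat -> xt) (w : word) := sumn [seq tdeg (s i) | i <- w].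
Definition xsum (s : nat -> xt) (w : word) := sumn [seq xdeg (s i) | i <- w].

Lemma tdeg_eval (s : nat -> xt_monoid) (w : word) : tdeg (eval s w) = minn 2 (tsum s w).
Proof.
rewrite /tsum; elim: w => [|x w] //=.
by case: (s x) => [k|a b|]; case: (eval s w) => [l|c d|] /=; lia.
Qed.

Lemma xdeg_eval (s : nat -> xt_monoid) (w : word) :
  tsum s w < 2 -> xdeg (eval s w) = xsum s w.
Proof.
rewrite /tsum /xsum; elim: w => [|x w IH] //= t2; have := tdeg_eval s w.
rewrite /tsum -IH; last by lia.
by case: (s x) t2 => [k|a b|] /=; case: (eval s w) => [l|c d|] //=; lia.
Qed.

Section Truncation.

Variables (m : nat) (f : nat -> nat).

Definition trunc (r : xt) : xt :=
  if r is XtX a b then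
    if a + b < m then r else if a + b == m then XtX (m - f b) (f b) else Zero
  else r.

Definition reduced (r : xt) : bool :=
  if r is XtX a b then (a + b < m) || (a + b == m) && (f b == b) else true.

Definition idem_below := forall b, b <= m -> f b <= m /\ f (f b) = f b.

Hypothesis f_idem : idem_below.

Lemma reduced_trunc (r : xt) : reduced (trunc r).
Proof.
case: r => //= a b; case: ltnP => [lt_ab|ge_ab] /=; first by rewrite lt_ab.
case: eqP => //= eq_ab.
have [le_fb ffb] := f_idem (b := b) ltac:(lia).
by rewrite ffb eqxx subnK // ltnn eqxx.
Qed.

Lemma trunc_id (r : xt) : reduced r -> trunc r = r.
Proof.
case: r => //= a b /orP[-> //|/andP[/eqP eq_ab /eqP fb]].
by rewrite eq_ab ltnn eqxx fb; congr XtX; lia.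
Qed.

Lemma trunc_top (j : nat) : j <= m -> trunc (XtX (m - j) j) = XtX (m - f j) (f j).
Proof. by move=> le_jm /=; rewrite subnK // ltnn eqxx. Qed.

Lemma trunc_mull (r s : xt) : trunc (xt_mul (trunc r) s) = trunc (xt_mul r s).
Proof.
case: r => [k|a b|] //=; case: s => [l|c d|] /=; try by repeat case: ifP.
have [le_bm|gt_bm] := leqP b m; last by repeat (case: ifP => /= ?); try lia.
have [le_fb ffb] := f_idem le_bm.
by case: l => [|l]; rewrite ?addn0; repeat (case: ifP => /= ?); rewrite ?addn0 ?ffb; try lia.
Qed.

Lemma trunc_mulr (r s : xt) : trunc (xt_mul r (trunc s)) = trunc (xt_mul r s).
Proof.
case: s => [k|a b|] //=; case: r => [l|c d|] /=; try by repeat case: ifP.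
have [le_bm|gt_bm] := leqP b m; last by repeat (case: ifP => /= ?); try lia.
have [le_fb ffb] := f_idem le_bm.
by case: l => [|l]; rewrite ?add0n; repeat (case: ifP => /= ?); rewrite ?add0n ?ffb; try lia.
Qed.

Definition trunc_monoid : monoid :=
  @retract xt_monoid trunc reduced trunc_mull trunc_mulr reduced_trunc trunc_id.

Lemma trunc_eval_eq (s : nat -> xt_monoid) (w1 w2 : word) :
  tsum s w1 = tsum s w2 -> xsum s w1 = xsum s w2 -> (tsum s w1 = 1 -> m < xsum s w1) ->
  trunc (eval s w1) = trunc (eval s w2).
Proof.
move=> Et Ex long.
have T1 := tdeg_eval s w1; have T2 := tdeg_eval s w2; rewrite -Et in T2.
have [t2|t1] := leqP 2 (tsum s w1).
  by move: T1 T2; case: (eval s w1) => [k|a b|]; case: (eval s w2) => [k'|a' b'|] //=; lia.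
have X1 := xdeg_eval t1; rewrite Et in t1; have X2 := xdeg_eval t1; rewrite -Ex in X2.
move: T1 T2 X1 X2 long.
case: (eval s w1) => [k|a b|]; case: (eval s w2) => [k'|a' b'|] //=; try lia.
- by move=> _ _ -> ->.
- move=> T1 _ X1 X2 /(_ ltac:(lia)) long.
  by repeat (case: ifP => ?); try lia.
Qed.

Lemma trunc_eval_gen_top (w : word) (c : nat) :
  c <= m -> trunc (eval gen w) = XtX (m - c) c ->
  exists2 b, b <= m & w = nseq (m - b) 0 ++ 1 :: nseq b 0 /\ f b = c.
Proof.
move=> le_cm; case Ew: (eval gen w) => [k|a b|] //=.
case: ifP => [lt_abm [ea eb]|_]; first lia.
case: eqP => // eq_abm [_ fb]; exists b; first lia.
by rewrite (eval_gen_XtX Ew) -eq_abm addnK.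
Qed.

End Truncation.

Lemma sumn_An_lhs (g : nat -> nat) (n : nat) :
  sumn [seq g i | i <- An_lhs n] = g 0 * n + sumn [seq g i | i <- iota 1 n].
Proof. by rewrite /An_lhs map_cat sumn_cat map_nseq sumn_nseq. Qed.

Lemma sumn_An_rhs (g : nat -> nat) (n : nat) :
  sumn [seq g i | i <- An_rhs n] = g 0 * n + sumn [seq g i | i <- iota 1 n].
Proof.
rewrite /An_rhs; elim: n 1 => [|n IH] k /=; first by rewrite muln0.
by rewrite IH mulnS; lia.
Qed.

Lemma filter_An_lhs (n : nat) : [seq i <- An_lhs n | i != 0] = iota 1 n.
Proof.
rewrite /An_lhs filter_cat filter_nseq /=.
by apply/all_filterP/allP => i; rewrite mem_iota; lia.
Qed.

Lemma filter_An_rhs (n : nat) : [seq i <- An_rhs n | i != 0] = iota 1 n.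
Proof.
suff filter_from k : 0 < k ->
    [seq i <- flatten [seq [:: i; 0] | i <- iota k n] | i != 0] = iota k n by exact: filter_from.
elim: n k => [|n IH] k k_gt0 //=.
by rewrite -lt0n k_gt0 IH.
Qed.

Lemma trunc_sat_An (m : nat) (f : nat -> nat) (f_idem : idem_below m f) (n : nat) :
  1 < n -> m < n -> sat (trunc_monoid f_idem) (An_lhs n) (An_rhs n).
Proof.
move=> lt1n lt_mn; apply/sat_retractP => s.
case s0: (s 0) => [[|k]|a b|].
  by rewrite (eval_filter_unit _ s0) (eval_filter_unit (An_rhs n) s0)
    filter_An_lhs filter_An_rhs.
all: apply: trunc_eval_eq;
  rewrite /tsum /xsum ?sumn_An_lhs ?sumn_An_rhs s0 /=; nia.
Qed.

Lemma sumn_Bword (g : nat -> nat) (n j : nat) :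
  j < n -> sumn [seq g i | i <- Bword n j] = g 0 * (n - 1) + g 1.
Proof.
move=> lt_jn; rewrite /Bword map_cat sumn_cat /= !map_nseq !sumn_nseq.
rewrite -[in RHS](@subnK j (n - 1)); last lia.
by rewrite mulnDr; lia.
Qed.

Lemma filter_Bword (n j : nat) : [seq i <- Bword n j | i != 0] = [:: 1].
Proof. by rewrite /Bword filter_cat filter_nseq /= filter_nseq. Qed.

Lemma trunc_sat_Bword (n : nat) (f : nat -> nat) (f_idem : idem_below (n - 1) f) (i j : nat) :
  2 < n -> i < n -> j < n -> f i = f j ->
  sat (trunc_monoid f_idem) (Bword n i) (Bword n j).
Proof.
move=> lt2n lt_in lt_jn fij; apply/sat_retractP => s.
have long_eq : (tsum s (Bword n i) = 1 -> n - 1 < xsum s (Bword n i)) ->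
    trunc (n - 1) f (eval s (Bword n i)) = trunc (n - 1) f (eval s (Bword n j)).
  by apply: trunc_eval_eq; rewrite /tsum /xsum !sumn_Bword.
case s0: (s 0) => [[|k]|a b|].
- by rewrite (eval_filter_unit _ s0) (eval_filter_unit (Bword n j) s0) !filter_Bword.
- case s1: (s 1) => [l|a b|].
  + by apply: long_eq; rewrite /tsum /xsum !sumn_Bword // s0 s1.
  + have [[k0 [a0 b0]]|pos] : (k = 0 /\ a = 0 /\ b = 0) \/ 0 < k + a + b by lia.
      by subst; rewrite /Bword !eval_xtx // !trunc_top ?fij //; lia.
    by apply: long_eq; rewrite /tsum /xsum !sumn_Bword // s0 s1 /=; nia.
  + by apply: long_eq; rewrite /tsum /xsum !sumn_Bword // s0 s1.
- by apply: long_eq; rewrite /tsum /xsum !sumn_Bword // s0 /=; lia.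
- by apply: long_eq; rewrite /tsum /xsum !sumn_Bword // s0 /=; lia.
Qed.

Definition classicb (P : Prop) : bool := if excluded_middle_informative P then true else false.

Lemma classicbP (P : Prop) : reflect P (classicb P).
Proof. by rewrite /classicb; case: excluded_middle_informative => H; constructor. Qed.

Section Representative.

Variables (n : nat) (r : nat -> nat -> Prop).
Hypothesis r_refl : forall b, b < n -> r b b.
Hypothesis r_sym : forall a b, r a b -> r b a.
Hypothesis r_trans : forall a b c, r a b -> r b c -> r a c.

Definition rep (b : nat) : nat := find (fun k => classicb (r k b)) (iota 0 n).

Lemma rep_spec (b : nat) : b < n -> rep b < n /\ r (rep b) b.
Proof.
move=> lt_bn; have has_b : has (fun k => classicb (r k b)) (iota 0 n).
  by apply/hasP; exists b; [rewrite mem_iota | apply/classicbP/r_refl].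
have := nth_find 0 has_b; rewrite has_find size_iota in has_b.
by rewrite nth_iota // add0n => /classicbP.
Qed.

Lemma rep_eq (b b' : nat) : r b b' -> rep b = rep b'.
Proof.
move=> rbb'; apply: eq_find => k.
apply/classicbP/classicbP => [rkb | rkb']; first exact: r_trans rbb'.
exact: r_trans rkb' (r_sym rbb').
Qed.

Lemma eq_rep (b b' : nat) : b < n -> b' < n -> rep b = rep b' -> r b b'.
Proof.
move=> /rep_spec[_ rb] /rep_spec[_ rb'] eq_rep_bb'.
by rewrite eq_rep_bb' in rb; exact: r_trans (r_sym rb) rb'.
Qed.

Lemma rep_idem : 0 < n -> idem_below (n - 1) rep.
Proof.
move=> n_gt0 b le_b; have [lt_rep rb] := rep_spec (b := b) ltac:(lia).
by split; [lia | exact: rep_eq rb].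
Qed.

End Representative.

Definition Brel (n : nat) (pi : word -> word -> Prop) (i k : nat) : Prop :=
  pi (Bword n i) (Bword n k).

Theorem lemma3p3 (n : nat) (pi : word -> word -> Prop) (u v : word) :
  3 <= n -> eqrel_on_B n pi -> var_sat n pi u v -> inB n u ->
  inB n v /\ pi u v.
Proof.
move=> n3 [piB pi_refl pi_sym pi_trans] Hsat [j lt_jn Eu]; subst u.
have r_refl b : b < n -> Brel n pi b b by move=> lt_bn; apply: pi_refl; exists b.
have r_sym a b : Brel n pi a b -> Brel n pi b a by exact: pi_sym.
have r_trans a b c : Brel n pi a b -> Brel n pi b c -> Brel n pi a c by exact: pi_trans.
have f_idem := rep_idem r_refl r_sym r_trans ltac:(lia).
pose M := trunc_monoid f_idem.
have M_in : in_AnId n pi M.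
  split.
  - exact: sat_O_retract xt_sat_O.
  - by apply: trunc_sat_An; lia.
  - move=> u' v' /[dup] /piB[[i lt_in ->] [k lt_kn ->]] pi_ik.
    by apply: trunc_sat_Bword => //; exact: (rep_eq n r_sym r_trans pi_ik).
have [lt_fj _] := rep_spec r_refl lt_jn.
have /sat_retractP/(_ gen) := Hsat M M_in.
rewrite /Bword eval_xtx // trunc_top; last lia.
case/esym/trunc_eval_gen_top => [|b le_b [-> fbj]]; first lia.
have lt_bn : b < n by lia.
split; first by exists b.
exact: (eq_rep r_refl r_sym r_trans lt_jn lt_bn (esym fbj)).
Qed.
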